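(* In the setting described in the context, assume $G$ satisfies Condition 1. Then for each non-faulty agent $i$, the limit of $|y(t)-x_i(t)|$ as $t\to\infty$ exists and $\lim_{t\to\infty}|y(t)-x_i(t)|=0$.
   Context: A synchronous system of $n$ agents communicates over a directed graph $G=(\mathcal{V},\mathcal{E})$, $\mathcal{V}=\{1,\dots,n\}$, without self-loops; $N_i^-=\{j:(j,i)\in\mathcal{E}\}$. At most $f$ agents are Byzantine faulty (may send arbitrary, possibly inconsistent values); $\mathcal{F}$ is the set of faulty agents, $\phi=|\mathcal{F}|\le f$, non-faulty agents indexed $1,\dots,n-\phi$. Assignment matrix $\mathbf{A}\in\mathbb{R}^{k\times n}$: nonnegative entries, columns summing to $1$; agent $i$ holds $g_i=\sum_{j=1}^k\mathbf{A}_{ji}h_j$ for admissible (convex, $L$-Lipschitz, nonempty compact argmin) $h_1,\dots,h_k:\mathbb{R}\to\mathbb{R}$. Sparsity parameter $sp(\mathbf{A})$: smallest $s$ such that the sum of any $s$ columns of $\mathbf{A}$ is component-wise positive ($n+1$ if the sum of all columns is not). Reduced graph w.r.t. $\mathcal{F}$: subgraph of $G$ obtained by removing the nodes of $\mathcal{F}$ with their edges and then up to $f$ additional incoming edges at each remaining node; $R_{\mathcal{F}}$ the set of reduced graphs, $\tau=|R_{\mathcal{F}}|$. Source component: set of nodes each having a directed path to every other node of the graph. Condition 1: for every $\mathcal{F}'\subseteq\mathcal{V}$ with $|\mathcal{F}'|\le f$, every reduced graph w.r.t. $\mathcal{F}'$ has a source component with at least $\max\{f+1,sp(\mathbf{A})\}$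 nodes. Step sizes: $\alpha(t)\ge0$ with $\alpha(t+1)\le\alpha(t)$, $\sum_t\alpha(t)=\infty$, $\sum_t\alpha^2(t)<\infty$. Algorithm 2: arbitrary $x_i(0)$; in iteration $t\ge1$ non-faulty agent $i$ sends $x_i(t-1)$ to all out-neighbors, receives $|N_i^-|$ values (default for missing), discards the $f$ smallest and $f$ largest, lets $N_i^*(t)$ be the senders of the remaining values with values $w_j$, sets $w_i=x_i(t-1)$, and updates $x_i(t)=\frac{1}{|N_i^*(t)|+1}\sum_{j\in\{i\}\cup N_i^*(t)}w_j-\alpha(t-1)d_i(t-1)$, $d_i(t-1)$ a subgradient of $g_i$ at $x_i(t-1)$. Known facts: with $\mathbf{x}(t)$ the non-faulty states and $\mathbf{d}(t)=(d_1(t),\dots,d_{n-\phi}(t))$, $\mathbf{x}(t+1)=\mathbf{M}(t)\mathbf{x}(t)-\alpha(t)\mathbf{d}(t)$ with row-stochastic $\mathbf{M}(t)$, and there is $0<\beta<1$ with $\mathbf{M}(t)\ge\beta\mathbf{H}(t)$ entrywise for the adjacency matrix $\mathbf{H}(t)$ (including diagonal ones) of some reduced graph in $R_{\mathcal{F}}$. Let $\Phi(t,r)=\mathbf{M}(t)\cdots\mathbf{M}(r)$ for $t\ge r$, $\Phi(t,t+1)=I$, $\nu=\tau(n-\phi)$, $\gamma=1-\beta^\nu$. Under Condition 1, for each $r$, $\lim_{t\to\infty}\Phi(t,r)=\mathbf{1}\pi(r)$ for a stochastic row vector $\pi(r)$, and $|\Phi_{ij}(t,r)-\pi_j(r)|\le\gamma^{\lceil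 (t-r+1)/\nu\rceil}$ for all $t\ge r$. Define $y(t)=\sum_{j=1}^{n-\phi}\pi_j(0)x_j(0)-\sum_{r=1}^{t}\alpha(r-1)\sum_{j=1}^{n-\phi}\pi_j(r)d_j(r-1)$. *)

From HB Require Import structures.
From mathcomp Require Import all_boot all_order all_algebra.
From mathcomp Require Import all_classical all_reals all_analysis.
Set Implicit Arguments. Unset Strict Implicit. Unset Printing Implicit Defensive.
Import Order.TTheory GRing.Theory Num.Theory.
Import numFieldNormedType.Exports.
Local Open Scope classical_set_scope.
Local Open Scope ring_scope.

Definition convex_fun {R : realType} (h : R -> R) : Prop :=
  forall x y l : R, 0 <= l -> l <= 1 ->
    h (l * x + (1 - l) * y) <= l * h x + (1 - l) * h y.

Definition lipschitz_with {R : realType} (L : R) (h : R -> R) : Prop :=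
  forall x y : R, `|h x - h y| <= L * `|x - y|.

Definition argmin_set {R : realType} (h : R -> R) : set R :=
  [set x | forall y, h x <= h y].

Definition admissible {R : realType} (L : R) (h : R -> R) : Prop :=
  [/\ convex_fun h, lipschitz_with L h,
      argmin_set h !=set0 & compact (argmin_set h)].

Definition subgradient {R : realType} (g : R -> R) (x d : R) : Prop :=
  forall y, g x + d * (y - x) <= g y.

Definition assignment_matrix {R : realType} k n (A : 'M[R]_(k, n)) : Prop :=
  (forall j i, 0 <= A j i) /\ (forall i, \sum_(j < k) A j i = 1).

Definition local_cost {R : realType} k n (A : 'M[R]_(k, n)) (h : 'I_k -> R -> R)
  (i : 'I_n) : R -> R := fun x => \sum_(j < k) A j i * h j x.

Definition row_stochastic {R : realType} m (M : 'M[R]_m) : Prop :=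
  (forall i j, 0 <= M i j) /\ (forall i, \sum_(j < m) M i j = 1).

Definition stochastic_row {R : realType} m (p : 'I_m -> R) : Prop :=
  (forall j, 0 <= p j) /\ \sum_(j < m) p j = 1.

(* prodM M r k = M(r+k-1) * ... * M(r) (k factors); i.e. Phi(r+k-1, r),
   with prodM M r 0 = I = Phi(r-1, r). *)
Fixpoint prodM {R : realType} m (M : nat -> 'M[R]_m) (r k : nat) : 'M[R]_m :=
  match k with
  | 0 => 1%:M
  | k'.+1 => M (r + k')%N *m prodM M r k'
  end.

(* Phi(t, r) = M(t) ... M(r) for t >= r (and = I when t + 1 = r). *)
Definition Phi {R : realType} m (M : nat -> 'M[R]_m) (t r : nat) : 'M[R]_m :=
  prodM M r (t.+1 - r).

Definition ceil_div (a b : nat) : nat := (a + b.-1) %/ b.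

Definition y_seq {R : realType} m (pi : nat -> 'I_m -> R) (x d : nat -> 'I_m -> R)
  (alpha : nat -> R) (t : nat) : R :=
  \sum_(j < m) pi 0%N j * x 0%N j
  - \sum_(1 <= r < t.+1) alpha r.-1 * \sum_(j < m) pi r j * d r.-1 j.

From HB Require Import structures.
From mathcomp Require Import all_boot all_order all_algebra.
From mathcomp Require Import all_classical all_reals all_analysis.
From mathcomp Require Import zify ring lra.
Set Implicit Arguments. Unset Strict Implicit. Unset Printing Implicit Defensive.
Import Order.TTheory GRing.Theory Num.Theory.
Import numFieldNormedType.Exports.
Local Open Scope classical_set_scope.
Local Open Scope ring_scope.

(* Unrolling the recursion, x_i(t) = sum_j Phi(t-1,0)_ij x_j(0)
   - sum_r alpha(r-1) sum_j Phi(t-1,r)_ij d_j(r-1), and y(t) is the same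
   expression with the rows of Phi replaced by pi(0) and pi(r).  Since
   |Phi - pi| decays geometrically in blocks of length tau (n - phi) and the
   subgradients are bounded by the Lipschitz constant L, |y(t) - x_i(t)| is
   at most a geometrically small term plus the convolution of alpha, which
   tends to 0 because sum alpha^2 converges, with a summable sequence;
   such a convolution tends to 0. *)

Section Convolution.
Variable R : realType.

Lemma big_nat_rev_sub (F : nat -> R) a t : (a <= t.+1)%N ->
  \sum_(a <= r < t.+1) F (t - r)%N = \sum_(0 <= s < t.+1 - a) F s.
Proof.
move=> hat; rewrite big_nat_rev /=.
rewrite (@eq_big_nat _ _ _ a t.+1 _ (fun r => F (r - a)%N)); last first.
  by move=> r /andP[h1 h2]; congr F; lia.
by rewrite -{1}(add0n a) big_addn; apply: eq_bigr => r _; rewrite addnK.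
Qed.

(* Split the convolution at r = T: for late r the factor a(r-1) is small and
   the w's sum to at most W; for the T early r the lag t - r is large. *)
Lemma cvg0_convolution (a w : nat -> R) A0 W :
  (forall r, 0 <= a r) -> (forall r, a r <= A0) -> a @ \oo --> 0 ->
  (forall s, 0 <= w s) -> w @ \oo --> 0 ->
  (forall N, \sum_(0 <= s < N) w s <= W) ->
  (fun t => \sum_(1 <= r < t.+1) a r.-1 * w (t - r)%N) @ \oo --> 0.
Proof.
move=> a0 aA acv w0 wcv wW.
have W0 : 0 <= W by have := wW 0%N; rewrite big_geq.
have A00 : 0 <= A0 by exact: le_trans (a0 0%N) (aA 0%N).
apply/cvgr0Pnorm_le => e e0.
pose e1 := e / (2 * (W + 1)).
have e1p : 0 < e1 by rewrite divr_gt0 // mulr_gt0 // ltr_wpDl.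
have [T _ HT] := proj1 (cvgr0Pnorm_le _) acv e1 e1p.
pose K := (A0 + 1) * (T%:R + 1).
have Kp : 0 < K by rewrite mulr_gt0 // ltr_wpDl.
pose e2 := e / (2 * K).
have e2p : 0 < e2 by rewrite divr_gt0 // mulr_gt0.
have [S _ HS] := proj1 (cvgr0Pnorm_le _) wcv e2 e2p.
exists (S + T)%N => // t /= Ht.
rewrite ger0_norm; last by apply: sumr_ge0 => r _; rewrite mulr_ge0.
rewrite (@big_cat_nat _ _ _ T.+1) //=; last by lia.
rewrite [X in _ <= X](splitr e); apply: lerD.
- have early : \sum_(1 <= r < T.+1) a r.-1 * w (t - r)%N <= A0 * e2 * T%:R.
    apply: (@le_trans _ _ (\sum_(1 <= r < T.+1) (A0 * e2))).
      apply: ler_sum_nat => r /andP[_ hr]; apply: ler_pM => //.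
      by have := HS (t - r)%N; rewrite /= ger0_norm // => /(_ ltac:(lia)).
    by rewrite sumr_const_nat subn1 mulr_natr.
  apply: (le_trans early); rewrite mulrAC.
  apply: (@le_trans _ _ (K * e2)).
    apply: ler_wpM2r; first exact: ltW.
    rewrite /K mulrDr mulrDl mulr1 -addrA lerDl.
    by rewrite addr_ge0 // ?mul1r ?addr_ge0.
  have -> : K * e2 = e / 2 by rewrite /e2; field; rewrite gt_eqF.
  done.
- apply: (@le_trans _ _ (\sum_(T.+1 <= r < t.+1) e1 * w (t - r)%N)).
    apply: ler_sum_nat => r /andP[h1 _]; apply: ler_wpM2r => //.
    have := HT r.-1; rewrite /= => /(_ ltac:(lia)).
    by rewrite ger0_norm.
  rewrite -mulr_sumr big_nat_rev_sub; last by lia.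
  apply: (@le_trans _ _ (e1 * W)); first by apply: ler_wpM2l; [exact: ltW|].
  rewrite /e1 mulrAC ler_pdivrMr; last by rewrite mulr_gt0 // ltr_wpDl.
  have -> : e / 2 * (2 * (W + 1)) = e * W + e by field.
  by rewrite lerDl ltW.
Qed.

Lemma cvg0_sqr (a : nat -> R) :
  (fun t => a t ^+ 2) @ \oo --> 0 -> a @ \oo --> 0.
Proof.
move=> a2; apply/cvgr0Pnorm_le => e e0.
have [T _ HT] := proj1 (cvgr0Pnorm_le _) a2 (e ^+ 2) (exprn_gt0 2 e0).
exists T => // t /= /HT; rewrite ger0_norm ?sqr_ge0 // -real_normK ?num_real //.
by rewrite ler_sqr ?nnegrE // ltW.
Qed.

End Convolution.

Section GeometricWeight.
Variable R : realType.

Definition geom_weight (g : R) nu s := g ^+ ceil_div s nu.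

Lemma geometric_sum_le (g : R) N : 0 <= g -> g < 1 ->
  \sum_(0 <= k < N) g ^+ k <= (1 - g)^-1.
Proof.
move=> g0 g1.
have E : (1 - g) * \sum_(0 <= k < N) g ^+ k = 1 - g ^+ N.
  elim: N => [|N IH]; first by rewrite big_geq // expr0 mulr0 subrr.
  by rewrite big_nat_recr //= mulrDr IH exprS; ring.
have gp : 0 < 1 - g by rewrite subr_gt0.
by rewrite -(ler_pM2l gp) E mulfV ?gt_eqF // gerBl exprn_ge0.
Qed.

Lemma sum_expr_divn (g : R) nu N : (0 < nu)%N ->
  \sum_(0 <= s < nu * N) g ^+ (s %/ nu) = nu%:R * \sum_(0 <= k < N) g ^+ k.
Proof.
move=> nu0; elim: N => [|N IH]; first by rewrite muln0 !big_geq // mulr0.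
rewrite (@big_cat_nat _ _ _ (nu * N)%N) //=; last by rewrite leq_mul2l ltnW ?orbT.
rewrite IH big_nat_recr //= mulrDr; congr (_ + _).
rewrite -{1}(add0n (nu * N)%N) big_addn.
rewrite (@eq_big_nat _ _ _ 0 (nu * N.+1 - nu * N)%N _ (fun _ => g ^+ N)); last first.
  move=> s /andP[_ hs]; congr (_ ^+ _).
  rewrite mulnC divnDMl // divn_small ?add0n //.
  by move: hs; rewrite mulnS addnK.
by rewrite sumr_const_nat mulnS addnK subn0 mulr_natl.
Qed.

Lemma geom_weight_sum_le (g : R) nu N : (0 < nu)%N -> 0 <= g -> g < 1 ->
  \sum_(0 <= s < N) geom_weight g nu s <= nu%:R * (1 - g)^-1.
Proof.
move=> nu0 g0 g1.
apply: (@le_trans _ _ (\sum_(0 <= s < N) g ^+ (s %/ nu))).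
  apply: ler_sum_nat => s _; apply: ler_wiXn2l => //; first exact: ltW.
  by rewrite /ceil_div leq_div2r // leq_addr.
apply: (@le_trans _ _ (\sum_(0 <= s < nu * N) g ^+ (s %/ nu))).
  rewrite (@big_cat_nat _ _ _ N 0 (nu * N)%N) //=; last by rewrite leq_pmull.
  by rewrite lerDl sumr_ge0 // => s _; rewrite exprn_ge0.
by rewrite sum_expr_divn // ler_wpM2l // geometric_sum_le.
Qed.

Lemma geom_weight_cvg0 (g : R) nu : (0 < nu)%N -> 0 <= g -> g < 1 ->
  geom_weight g nu @ \oo --> 0.
Proof.
move=> nu0 g0 g1.
have gc : (GRing.exp g : R ^nat) @ \oo --> 0 by apply: cvg_expr; rewrite ger0_norm.
apply/cvgr0Pnorm_le => e e0.
have [K _ HK] := proj1 (cvgr0Pnorm_le _) gc e e0.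
exists (K * nu)%N => // s /= hs.
apply: le_trans (HK K (leqnn K)).
rewrite !ger0_norm ?exprn_ge0 //.
apply: ler_wiXn2l => //; first exact: ltW.
apply: (@leq_trans (s %/ nu)); last by rewrite /ceil_div leq_div2r // leq_addr.
by rewrite -(mulnK K nu0) leq_div2r.
Qed.

End GeometricWeight.

Section Subgradient.
Variable R : realType.

Lemma lipschitz_local_cost k n (A : 'M[R]_(k, n)) (h : 'I_k -> R -> R) L i :
  assignment_matrix A -> (forall j, lipschitz_with L (h j)) ->
  lipschitz_with L (local_cost A h i).
Proof.
move=> [A0 A1] hL u v; rewrite /local_cost -sumrB.
apply: (le_trans (ler_norm_sum _ _ _)).
apply: (@le_trans _ _ (\sum_(j < k) A j i * (L * `|u - v|))).
  apply: ler_sum => j _; rewrite -mulrBr normrM ger0_norm //.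
  by apply: ler_wpM2l => //; apply: hL.
by rewrite -mulr_suml A1 mul1r.
Qed.

Lemma subgradient_norm_le (g : R -> R) L x d :
  lipschitz_with L g -> subgradient g x d -> `|d| <= L.
Proof.
move=> gL sg.
have slope_le s : `|s| = 1 -> d * s <= L.
  move=> s1; have := sg (x + s); have := gL (x + s) x.
  rewrite [x + s - x]addrC addKr s1 mulr1 => Lip sub.
  by rewrite -(lerD2l (g x)) (le_trans sub) // -lerBlDl (le_trans (ler_norm _)).
rewrite ler_norml lerNl -mulrN1 -[d in _ && (d <= _)]mulr1.
by rewrite !slope_le ?normrN ?normr1.
Qed.

End Subgradient.

Section Unrolling.
Variables (R : realType) (m : nat) (M : nat -> 'M[R]_m).

Lemma sum_scalar_mx1 (v : 'I_m -> R) i : \sum_(j < m) (1%:M : 'M[R]_m) i j * v j = v i.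
Proof.
rewrite (bigD1 i) //= mxE eqxx mul1r big1 ?addr0 // => j ji.
by rewrite mxE eq_sym (negbTE ji) mul0r.
Qed.

Lemma sum_prodM_recr (v : 'I_m -> R) r t i : (r <= t)%N ->
  \sum_(j < m) prodM M r (t.+1 - r) i j * v j =
  \sum_(k < m) M t i k * \sum_(j < m) prodM M r (t - r) k j * v j.
Proof.
move=> rt; rewrite subSn //= subnKC //.
under eq_bigr do rewrite mxE mulr_suml.
rewrite exchange_big /=; apply: eq_bigr => k _.
by rewrite mulr_sumr; apply: eq_bigr => j _; rewrite mulrA.
Qed.

Variables (x d : nat -> 'I_m -> R) (alpha : nat -> R).
Hypothesis hx : forall t i, x t.+1 i = \sum_(j < m) M t i j * x t j - alpha t * d t i.

Lemma unroll_recursion t i : x t i = \sum_(j < m) prodM M 0 t i j * x 0%N j -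
    \sum_(1 <= r < t.+1) alpha r.-1 * \sum_(j < m) prodM M r (t - r) i j * d r.-1 j.
Proof.
elim: t i => [|t IH] i; first by rewrite big_geq //= sum_scalar_mx1 subr0.
rewrite hx.
have := sum_prodM_recr (x 0%N) i (leq0n t); rewrite !subn0 => ->.
rewrite big_nat_recr //= subnn /= sum_scalar_mx1.
rewrite (@eq_big_nat _ _ _ 1 t.+1 _ (fun r => alpha r.-1 *
   \sum_(k < m) M t i k * \sum_(j < m) prodM M r (t - r) k j * d r.-1 j)); last first.
  by move=> r /andP[_ hr]; rewrite sum_prodM_recr.
under eq_bigr do rewrite IH mulrBr.
rewrite sumrB opprD addrA; congr (_ - _ - _).
under eq_bigr do rewrite mulr_sumr.
rewrite exchange_big /=; apply: eq_bigr => r _.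
by rewrite mulr_sumr; apply: eq_bigr => k _; rewrite mulrCA.
Qed.

Variables (pi : nat -> 'I_m -> R) (w : nat -> R) (L : R).
Hypothesis alpha_ge0 : forall t, 0 <= alpha t.
Hypothesis d_le : forall t j, `|d t j| <= L.

Lemma y_seq_sub_unrolled t i : y_seq pi x d alpha t - x t i =
  \sum_(j < m) (pi 0%N j - prodM M 0 t i j) * x 0%N j -
  \sum_(1 <= r < t.+1) alpha r.-1 *
     \sum_(j < m) (pi r j - prodM M r (t - r) i j) * d r.-1 j.
Proof.
rewrite /y_seq (unroll_recursion t i).
under [X in _ = X - _]eq_bigr do rewrite mulrBl.
under [X in _ = _ - X]eq_bigr do rewrite (eq_bigr _ (fun j _ => mulrBl _ _ _))
  sumrB mulrBr.
rewrite !sumrB; ring.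
Qed.

Lemma y_seq_dist_le i t :
  (forall r j, (r <= t)%N -> `|pi r j - prodM M r (t - r) i j| <= w (t - r)%N) ->
  `|y_seq pi x d alpha t - x t i| <=
    w t * \sum_(j < m) `|x 0%N j| +
    (m%:R * L) * \sum_(1 <= r < t.+1) alpha r.-1 * w (t - r)%N.
Proof.
move=> hP; rewrite y_seq_sub_unrolled; apply: le_trans (ler_normB _ _) _.
apply: lerD.
  apply: (le_trans (ler_norm_sum _ _ _)).
  rewrite mulr_sumr; apply: ler_sum => j _; rewrite normrM.
  by apply: ler_wpM2r => //; have := hP 0%N j (leq0n t); rewrite !subn0.
apply: (le_trans (ler_norm_sum _ _ _)).
rewrite mulr_sumr; apply: ler_sum_nat => r /andP[_ hr].
rewrite normrM ger0_norm //.
have -> : m%:R * L * (alpha r.-1 * w (t - r)%N) =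
   alpha r.-1 * \sum_(j < m) w (t - r)%N * L.
  by rewrite sumr_const card_ord -mulr_natr; ring.
apply: ler_wpM2l => //; apply: (le_trans (ler_norm_sum _ _ _)).
by apply: ler_sum => j _; rewrite normrM ler_pM //; apply: hP; lia.
Qed.

End Unrolling.

Section ConsensusRate.
Variable R : realType.

Lemma stochastic_row_dist_mx1_le1 m (p : 'I_m -> R) i j :
  stochastic_row p -> `|p j - (1%:M : 'M[R]_m) i j| <= 1.
Proof.
move=> [p0 p1]; have pj1 : p j <= 1 by rewrite -p1 (bigD1 j) //= lerDl sumr_ge0.
have := p0 j; rewrite mxE; case: (i == j) => /= hj; rewrite ler_norml.
all: by apply/andP; split; lra.
Qed.

Lemma prodM_pi_dist_le m (M : nat -> 'M[R]_m) (pi : nat -> 'I_m -> R) g nu :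
  (0 < nu)%N -> (forall r, stochastic_row (pi r)) ->
  (forall r t i j, (r <= t)%N ->
     `|Phi M t r i j - pi r j| <= g ^+ ceil_div (t - r).+1 nu) ->
  forall r t i j, (r <= t)%N ->
    `|pi r j - prodM M r (t - r) i j| <= geom_weight g nu (t - r).
Proof.
move=> nu0 hpi hPhi r t i j; rewrite leq_eqVlt => /orP[/eqP<- | rt].
  rewrite subnn /geom_weight /ceil_div add0n divn_small ?expr0; last by lia.
  exact: stochastic_row_dist_mx1_le1.
(* prodM M r (t - r) is Phi(t - 1, r) *)
have := hPhi r t.-1 i j ltac:(lia); rewrite /Phi prednK; last by lia.
have -> : (t.-1 - r).+1 = (t - r)%N by lia.
by rewrite distrC.
Qed.

End ConsensusRate.

Theorem lemma7 (R : realType) (n f phi k tau : nat) (L beta : R)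
  (A : 'M[R]_(k, n)) (h : 'I_k -> R -> R) (alpha : nat -> R)
  (M : nat -> 'M[R]_(n - phi)) (x d : nat -> 'I_(n - phi) -> R)
  (pi : nat -> 'I_(n - phi) -> R) :
  (phi <= f)%N ->
  assignment_matrix A ->
  (forall j, admissible L (h j)) ->
  (* step sizes *)
  (forall t, 0 <= alpha t) ->
  (forall t, alpha t.+1 <= alpha t) ->
  (series alpha @ \oo --> +oo) ->
  cvgn (series (fun t => alpha t ^+ 2)) ->
  (* non-faulty agents are indexed 1..n-phi, i.e. the first n-phi columns of A *)
  (forall t (i : 'I_(n - phi)),
      subgradient (local_cost A h (widen_ord (leq_subr phi n) i)) (x t i) (d t i)) ->
  (* known fact: matrix form of Algorithm 2 for the non-faulty agents *)
  (forall t, row_stochastic (M t)) ->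
  (forall t i, x t.+1 i = \sum_(j < n - phi) M t i j * x t j - alpha t * d t i) ->
  (* known fact (consequence of Condition 1): convergence of Phi with rate *)
  (0 < tau)%N -> 0 < beta -> beta < 1 ->
  (forall r, stochastic_row (pi r)) ->
  (forall r t (i j : 'I_(n - phi)), (r <= t)%N ->
      `|Phi M t r i j - pi r j| <=
        (1 - beta ^+ (tau * (n - phi))) ^+ ceil_div (t - r).+1 (tau * (n - phi))) ->
  forall i : 'I_(n - phi),
    (fun t => `|y_seq pi x d alpha t - x t i|) @ \oo --> 0.
Proof.
move=> _ hA hh alpha_ge0 alpha_noninc _ alpha_sqr hsg _ hx tau0 b0 b1 hpi hPhi i.
set nu := (tau * (n - phi))%N in hPhi; set g := 1 - beta ^+ nu in hPhi.
have nu0 : (0 < nu)%N by rewrite muln_gt0 tau0 (leq_ltn_trans _ (ltn_ord i)).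
have [g0 g1] : 0 <= g /\ g < 1.
  by have := exprn_gt0 nu b0; have := exprn_ile1 nu (ltW b0) (ltW b1); rewrite /g; lra.
have d_le t j : `|d t j| <= L.
  apply: subgradient_norm_le (hsg t j); apply: lipschitz_local_cost => // j'.
  by have [] := hh j'.
have alpha_le_alpha0 r : alpha r <= alpha 0%N by exact: (proj1 (nonincreasing_seqP _)).
have conv_cvg0 : (fun t => \sum_(1 <= r < t.+1) alpha r.-1 * geom_weight g nu (t - r))
    @ \oo --> 0.
  apply: (cvg0_convolution alpha_ge0 alpha_le_alpha0) (geom_weight_cvg0 nu0 g0 g1) _.
  - exact: cvg0_sqr (cvg_series_cvg_0 alpha_sqr).
  - by move=> s; apply: exprn_ge0.
  - by move=> N; apply: geom_weight_sum_le.
set C := \sum_j `|x 0%N j|; set D := (n - phi)%:R * L.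
apply: (@squeeze_cvgr _ _ _ _ (cst 0) (fun t => geom_weight g nu t * C +
  D * \sum_(1 <= r < t.+1) alpha r.-1 * geom_weight g nu (t - r))).
- apply: nearW => t; rewrite normr_ge0 /=.
  by apply: y_seq_dist_le => // r j; exact: prodM_pi_dist_le hPhi r t i j.
- exact: cvg_cst.
have := cvgD (@cvgMr_tmp _ _ _ _ _ _ C (geom_weight_cvg0 nu0 g0 g1))
  (@cvgMl_tmp _ _ _ _ _ D _ conv_cvg0).
by rewrite mul0r mulr0 addr0; apply.
Qed.
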